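(* In the Gödel setting described in the context, let $(A,B,R)$ be a $\top$-normalized fuzzy context and $(g,f)\in\mathcal{F}_N$ such that for every $a\in A$ there exists $b\in B$ with $g(b)>R(a,b)$. Then $g^{\uparrow}(a)\le g^{\uparrow_\pi}(a)$ for all $a\in A$.
   Context: Gödel setting: all truth-value sets are $[0,1]$ with the usual order, $x\&y=\min\{x,y\}$, and $z\swarrow y=z\nwarrow y$ equals $1$ if $y\le z$ and $z$ otherwise. A fuzzy context is $(A,B,R)$ with nonempty finite sets $A,B$ and $R\colon A\times B\to[0,1]$. For $g\colon B\to[0,1]$, $f\colon A\to[0,1]$: $g^{\uparrow}(a)=\inf_{b\in B}(R(a,b)\swarrow g(b))$, $f^{\downarrow}(b)=\inf_{a\in A}(R(a,b)\nwarrow f(a))$, $g^{\uparrow_N}(a)=\inf_{b\in B}(g(b)\swarrow R(a,b))$, $f^{\downarrow^N}(b)=\inf_{a\in A}(f(a)\nwarrow R(a,b))$, $g^{\uparrow_\pi}(a)=\sup_{b\in B}\min\{R(a,b),g(b)\}$. $\mathcal{F}_N=\{(g,f)\mid g^{\uparrow_N}=f,\ f^{\downarrow^N}=g\}$. The context is normalized if no row $R(a,\cdot)$ and no column $R(\cdot,b)$ is identically $0$, and no row and no column has all values different from $0$; it is $\top$-normalized if moreover for every $a\in A$ there is $b_a\in B$ with $R(a,b_a)=1$. *)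

From mathcomp Require Import all_boot all_order all_algebra.
From mathcomp Require Import reals.
Set Implicit Arguments. Unset Strict Implicit. Unset Printing Implicit Defensive.
Import Order.TTheory GRing.Theory Num.Theory.
Local Open Scope ring_scope.

Section Goedel.
Variable R : realType.

(* Goedel residuum: z ↙ y = z ↖ y = 1 if y <= z, z otherwise *)
Definition gres (z y : R) : R := if y <= z then 1 else z.

Definition in01 (x : R) : Prop := 0 <= x <= 1.

(* infimum / supremum over a nonempty finite set of values in [0,1]:
   since all values lie in [0,1], folding min with 1 (resp. max with 0)
   gives exactly the inf (resp. sup). *)
Definition inf01 (T : finType) (F : T -> R) : R := \big[Order.min/1]_(t : T) F t.
Definition sup01 (T : finType) (F : T -> R) : R := \big[Order.max/0]_(t : T) F t.

Variables (A B : finType) (I : A -> B -> R).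

Definition up (g : B -> R) (a : A) : R := inf01 (fun b => gres (I a b) (g b)).
Definition down (f : A -> R) (b : B) : R := inf01 (fun a => gres (I a b) (f a)).
Definition upN (g : B -> R) (a : A) : R := inf01 (fun b => gres (g b) (I a b)).
Definition downN (f : A -> R) (b : B) : R := inf01 (fun a => gres (f a) (I a b)).
Definition upPi (g : B -> R) (a : A) : R := sup01 (fun b => Order.min (I a b) (g b)).

Definition inFN (g : B -> R) (f : A -> R) : Prop :=
  (forall a, upN g a = f a) /\ (forall b, downN f b = g b).

Definition fuzzy_context : Prop :=
  (exists a : A, True) /\ (exists b : B, True) /\ (forall a b, in01 (I a b)).

Definition normalized : Prop :=
  fuzzy_context /\
  (forall a, exists b, I a b != 0) /\ (forall b, exists a, I a b != 0) /\
  (forall a, exists b, I a b = 0) /\ (forall b, exists a, I a b = 0).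

Definition top_normalized : Prop :=
  normalized /\ forall a, exists b, I a b = 1.
End Goedel.

From mathcomp Require Import all_boot all_order all_algebra.
From mathcomp Require Import reals.
Set Implicit Arguments. Unset Strict Implicit. Unset Printing Implicit Defensive.
Import Order.TTheory GRing.Theory Num.Theory.
Local Open Scope ring_scope.

(* A witness b with g(b) > R(a,b) makes the residuum R(a,b) ↙ g(b) equal to
   R(a,b), so g^↑(a) <= R(a,b); and since R(a,b) <= g(b), the same b
   contributes min(R(a,b), g(b)) = R(a,b) to the supremum g^↑π(a). *)

Section GoedelBounds.
Variable R : realType.

Lemma gres_gt (z y : R) : z < y -> gres z y = z.
Proof. by move=> lt_zy; rewrite /gres leNgt lt_zy. Qed.

Lemma inf01_le (T : finType) (F : T -> R) (t : T) : inf01 F <= F t.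
Proof. by rewrite /inf01 (bigD1 t) //= ge_min lexx. Qed.

Lemma le_sup01 (T : finType) (F : T -> R) (t : T) : F t <= sup01 F.
Proof. by rewrite /sup01 (bigD1 t) //= le_max lexx. Qed.

Variables (A B : finType) (I : A -> B -> R) (g : B -> R).

Lemma up_le_lt (a : A) (b : B) : I a b < g b -> up I g a <= I a b.
Proof.
move=> lt_Ig; rewrite -[leRHS](gres_gt lt_Ig).
exact: (inf01_le (fun b => gres (I a b) (g b))).
Qed.

Lemma le_upPi (a : A) (b : B) : I a b <= g b -> I a b <= upPi I g a.
Proof.
move=> le_Ig; rewrite -[leLHS](min_idPl le_Ig).
exact: (le_sup01 (fun b => Order.min (I a b) (g b))).
Qed.

End GoedelBounds.

Theorem mainTheorem13 (R : realType) (A B : finType) (I : A -> B -> R)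
    (g : B -> R) (f : A -> R) :
  top_normalized I ->
  (forall b, in01 (g b)) -> (forall a, in01 (f a)) ->
  inFN I g f ->
  (forall a, exists b, g b > I a b) ->
  forall a, up I g a <= upPi I g a.
Proof.
move=> _ _ _ _ witness a; have [b lt_Ig] := witness a.
exact: le_trans (up_le_lt lt_Ig) (le_upPi (ltW lt_Ig)).
Qed.
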